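(* Let $n\ge 5$. For every integer $k$ with $1\le k\le\lfloor\frac{n-1}{2}\rfloor$ there exists a Latin square of order $n$ with inner distance $k$. Moreover, for any Latin square $L$ of order $n$ with inner distance $k$ and any integer $k'$ with $1\le k'<k$, there is a permutation $\sigma$ of $[1,n]$ such that $\sigma(L)$ has inner distance $k'$.
   Context: Symbols are $[1,n]$. For $a,b\in[1,n]$, $\mathrm{dist}(a,b)$ is the minimum of the residues of $a-b$ and $b-a$ modulo $n$ (in $[0,n-1]$). A Latin square of order $n$ is an $n\times n$ matrix over $[1,n]$ with each symbol exactly once in every row and column; its inner distance is the minimum of $\mathrm{dist}$ over symbols in horizontally or vertically adjacent cells. For a permutation $\sigma$ of $[1,n]$, $\sigma(L)$ is obtained by applying $\sigma$ to every entry of $L$. *)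

From mathcomp Require Import all_boot all_fingroup.
Set Implicit Arguments. Unset Strict Implicit. Unset Printing Implicit Defensive.

(* Symbols [1,n] are represented by 'I_n = {0,...,n-1} via s |-> s-1;
   the cyclic distance is invariant under this shift. *)

Definition cdist (n : nat) (a b : 'I_n) : nat :=
  minn ((a + n - b) %% n) ((b + n - a) %% n).

Definition square (n : nat) := {ffun 'I_n * 'I_n -> 'I_n}.

Definition is_latin (n : nat) (L : square n) : Prop :=
  (forall i : 'I_n, bijective (fun j : 'I_n => L (i, j))) /\
  (forall j : 'I_n, bijective (fun i : 'I_n => L (i, j))).

Definition adjacent (n : nat) (c d : 'I_n * 'I_n) : bool :=
  ((c.1 == d.1) && ((c.2.+1 == d.2 :> nat) || (d.2.+1 == c.2 :> nat))) ||
  ((c.2 == d.2) && ((c.1.+1 == d.1 :> nat) || (d.1.+1 == c.1 :> nat))).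

(* inner distance: minimum of cdist over adjacent cells (the default value n
   is never attained when n >= 2, since adjacent pairs exist and cdist < n) *)
Definition inner_distance (n : nat) (L : square n) : nat :=
  \big[minn/n]_(p : ('I_n * 'I_n) * ('I_n * 'I_n) | adjacent p.1 p.2)
     cdist (L p.1) (L p.2).

Definition permute_square (n : nat) (s : {perm 'I_n}) (L : square n) : square n :=
  [ffun c => s (L c)].

From mathcomp Require Import all_boot all_order all_fingroup.
From mathcomp Require Import zify.
Import Order.TTheory.

Set Implicit Arguments.
Unset Strict Implicit.
Unset Printing Implicit Defensive.

(* If g enumerates [0, n) so that consecutive terms are at cyclic distance at
   least floor((n-1)/2), with equality once, then L(i,j) = g(i) + g(j) mod n is
   Latin, and adjacent entries of L are translates of consecutive terms of g,
   so L has inner distance floor((n-1)/2).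
   Transposing two cyclically consecutive symbols changes every distance, hence
   the inner distance, by at most one.  Take two adjacent cells carrying symbols
   a < b and slide b down to a+1 by such transpositions: the inner distance
   starts at k and ends at most at dist(a, a+1) = 1, so it passes through every
   value in between. *)

Ltac case_ifs := repeat match goal with
  |- context [if ?c then _ else _] => let H := fresh "H" in case: (boolP c) => H end.

Definition cdistn (n a b : nat) : nat :=
  minn (if b <= a then a - b else a + n - b) (if a <= b then b - a else b + n - a).

Lemma cdistE n (a b : 'I_n) : cdist a b = cdistn n a b.
Proof.
have modE x y : x < n -> y < n -> (x + n - y) %% n = if y <= x then x - y else x + n - y.
  move=> ltxn ltyn; case: leqP => lexy; last by rewrite modn_small //; lia.
  have -> : x + n - y = (x - y) + n by lia.
  by rewrite modnDr modn_small //; lia.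
by rewrite /cdist /cdistn !modE.
Qed.

Lemma cdistnC n a b : cdistn n a b = cdistn n b a.
Proof. rewrite /cdistn; case_ifs; lia. Qed.

Lemma cdistn_modDl n x y z : x < n -> y < n -> z < n ->
  cdistn n ((x + y) %% n) ((x + z) %% n) = cdistn n y z.
Proof.
have modE u v : u < n -> v < n -> (u + v) %% n = if u + v < n then u + v else u + v - n.
  move=> ltun ltvn; case: ltnP => leuv; first by rewrite modn_small.
  have -> : u + v = (u + v - n) + n by lia.
  by rewrite modnDr modn_small //; lia.
move=> ltxn ltyn ltzn; rewrite !modE //.
by case: (ltnP (x + y) n); case: (ltnP (x + z) n); rewrite /cdistn; case_ifs; lia.
Qed.

Lemma cdist_tperm_succ n (u v a b : 'I_n) : v = u.+1 :> nat ->
  cdist a b <= cdist (tperm u v a) (tperm u v b) + 1.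
Proof.
move=> vE; have := ltn_ord a; have := ltn_ord b; have := ltn_ord u; have := ltn_ord v.
case: tpermP => [->|->|_ _]; case: tpermP => [->|->|_ _];
  rewrite !cdistE /cdistn; case_ifs; lia.
Qed.

Lemma adjacentC n (c d : 'I_n * 'I_n) : adjacent c d = adjacent d c.
Proof.
by rewrite /adjacent [d.1 == _]eq_sym [d.2 == _]eq_sym (orbC (d.2.+1 == _)) (orbC (d.1.+1 == _)).
Qed.

Section InnerDistance.

Variables (n : nat) (L : square n).

Lemma inner_distance_le c d : adjacent c d -> inner_distance L <= cdist (L c) (L d).
Proof.
move=> adj_cd; rewrite /inner_distance -minEnat.
exact: (@bigmin_le_cond _ _ _ n (c, d) (fun p => adjacent p.1 p.2)).
Qed.

Lemma inner_distance_ge k : k <= n ->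
  (forall c d, adjacent c d -> k <= cdist (L c) (L d)) -> k <= inner_distance L.
Proof.
move=> lekn ge_k; rewrite /inner_distance -minEnat.
by apply: (@le_bigmin _ nat) => // [[c d] /ge_k].
Qed.

Lemma permute_square1 : permute_square 1 L = L.
Proof. by apply/ffunP => c; rewrite ffunE perm1. Qed.

Lemma permute_square_latin s : is_latin L -> is_latin (permute_square s L).
Proof.
move=> [rowL colL]; split => i; apply: injF_bij => x y; rewrite !ffunE => /perm_inj.
- exact: (bij_inj (rowL i)).
- exact: (bij_inj (colL i)).
Qed.

Lemma inner_distance_tperm_succ s (u v : 'I_n) : v = u.+1 :> nat ->
  inner_distance (permute_square s L) <=
  inner_distance (permute_square (s * tperm u v) L) + 1.
Proof.
move=> vE; apply: (big_ind2 (fun a b => a <= b + 1)) => [|a b c d|p _]; try lia.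
by rewrite !ffunE !permM; apply: cdist_tperm_succ.
Qed.

End InnerDistance.

Lemma discrete_ivt (f : nat -> nat) m k :
  (forall t, t < m -> f t <= (f t.+1).+1) -> f m <= k <= f 0 ->
  exists2 t, t <= m & f t = k.
Proof.
elim: m => [|m IHm] step /andP[fm_le le_f0]; first by exists 0 => //; lia.
case: (leqP (f m) k) => fm_k.
  have [|t le_tm ftE] := IHm (fun t lt_tm => step t (ltnW lt_tm)); first by apply/andP.
  by exists t => //; apply: leqW.
by exists m.+1 => //; have := step m (ltnSn m); lia.
Qed.

Section Slide.

Variables (n : nat) (b : 'I_n).

Definition ord_subn t : 'I_n := Ordinal (leq_ltn_trans (leq_subr t b) (ltn_ord b)).

Fixpoint slide t : {perm 'I_n} :=
  if t is t'.+1 then slide t' * tperm (ord_subn t) (ord_subn t') else 1.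

Lemma slide_b t : slide t b = ord_subn t.
Proof.
elim: t => [|t IHt]; first by apply: val_inj; rewrite /= perm1 subn0.
by rewrite /= permM IHt tpermR.
Qed.

Lemma slide_fix (a : 'I_n) t : a < b - t -> slide t a = a.
Proof.
elim: t => [|t IHt lt_a]; first by rewrite perm1.
rewrite /= permM IHt; last lia.
by rewrite tpermD // -val_eqE /=; lia.
Qed.

End Slide.

Lemma relabel_inner_distance n (L : square n) c d k :
  adjacent c d -> L c != L d -> 1 <= k <= inner_distance L ->
  exists s : {perm 'I_n}, inner_distance (permute_square s L) = k.
Proof.
wlog lt_cd : c d / L c < L d.
  move=> gen adj_cd; case: (ltngtP (L c) (L d)) => [||/val_inj ->]; last by rewrite eqxx.
  - by move=> lt_cd; apply: gen.
  - by move=> lt_dc; rewrite eq_sym; apply: gen => //; rewrite adjacentC.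
move=> adj_cd _ /andP[k_gt0 le_k]; set a := L c in lt_cd *; set b := L d in lt_cd *.
pose f t := inner_distance (permute_square (slide b t) L).
have step t : t < b - a - 1 -> f t <= (f t.+1).+1.
  by move=> lt_t; rewrite -addn1; apply: inner_distance_tperm_succ => /=; lia.
have bounds : f (b - a - 1) <= k <= f 0.
  apply/andP; split; last by rewrite /f /= permute_square1.
  apply: leq_trans (inner_distance_le _ adj_cd) _.
  rewrite !ffunE -/a -/b slide_b slide_fix ?cdistE /cdistn /=; try lia.
  by case_ifs; lia.
by have [t _ ftE] := discrete_ivt step bounds; exists (slide b t).
Qed.

Lemma latin_adjacent_neq n (L : square n) : 1 < n -> is_latin L ->
  exists c d, adjacent c d /\ L c != L d.
Proof.
move=> lt1n [rowL _]; have lt0n := ltnW lt1n.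
pose i0 := Ordinal lt0n; pose i1 := Ordinal lt1n.
exists (i0, i0), (i0, i1); split; first by rewrite /adjacent /= ?eqxx.
by apply/negP => /eqP /(bij_inj (rowL i0)) /(congr1 val).
Qed.

Section SumSquare.

Variables (n : nat) (g : nat -> nat).
Hypothesis n_gt0 : 0 < n.
Hypothesis g_lt : forall j, j < n -> g j < n.
Hypothesis g_inj : forall i j, i < n -> j < n -> g i = g j -> i = j.

Definition sum_square : square n :=
  [ffun c : 'I_n * 'I_n => Ordinal (ltn_pmod (g c.1 + g c.2) n_gt0)].

Lemma sum_square_latin : is_latin sum_square.
Proof.
have cancel_mod (i x y : 'I_n) : (g i + g x) %% n = (g i + g y) %% n -> x = y.
  move/eqP; rewrite eqn_modDl !modn_small ?g_lt // => /eqP /g_inj.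
  by move/(_ (ltn_ord x) (ltn_ord y))/val_inj.
split=> i; apply: injF_bij => x y /(congr1 val); rewrite !ffunE /= => E.
- exact: (cancel_mod i).
- by apply: (cancel_mod i); rewrite ![g i + _]addnC.
Qed.

Lemma sum_square_adjacent c d : adjacent c d ->
  exists2 j, j.+1 < n & cdist (sum_square c) (sum_square d) = cdistn n (g j) (g j.+1).
Proof.
move: c d => [i1 j1] [i2 j2]; have := ltn_ord i1; have := ltn_ord i2.
have := ltn_ord j1; have := ltn_ord j2.
rewrite cdistE !ffunE /adjacent /= => ltj2 ltj1 lti2 lti1.
case/orP=> /andP[/eqP <- /orP[/eqP E|/eqP E]].
- by exists j1; rewrite E // cdistn_modDl ?g_lt.
- by exists j2; rewrite E // cdistn_modDl ?g_lt // cdistnC.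
- by exists i1; rewrite E // ![_ + g j1]addnC cdistn_modDl ?g_lt.
- by exists i2; rewrite E // ![_ + g j1]addnC cdistn_modDl ?g_lt // cdistnC.
Qed.

Lemma sum_square_inner_distance k :
  (forall j, j.+1 < n -> k <= cdistn n (g j) (g j.+1)) ->
  (exists2 j, j.+1 < n & cdistn n (g j) (g j.+1) = k) ->
  inner_distance sum_square = k.
Proof.
move=> ge_k [j ltjn stepE]; apply/eqP; rewrite eqn_leq; apply/andP; split.
  pose i0 := Ordinal n_gt0.
  have /(inner_distance_le sum_square) :
      adjacent (i0, Ordinal (ltnW ltjn)) (i0, Ordinal ltjn).
    by rewrite /adjacent /= ?eqxx.
  by rewrite cdistE !ffunE /= cdistn_modDl ?g_lt // ?stepE //; apply: ltnW.
apply: inner_distance_ge => [|c d /sum_square_adjacent [i ltin ->]]; last exact: ge_k.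
by rewrite -stepE /cdistn; case_ifs; lia.
Qed.

End SumSquare.

Definition zigzag n j :=
  if j %% 2 == 1 then n %/ 2 - j %/ 2 else if j == 0 then 0 else n - j %/ 2.

Lemma zigzag_lt n j : j < n -> zigzag n j < n.
Proof. rewrite /zigzag; case_ifs; lia. Qed.

Lemma zigzag_inj n i j : i < n -> j < n -> zigzag n i = zigzag n j -> i = j.
Proof. rewrite /zigzag; case_ifs; lia. Qed.

Lemma zigzag_step n j : j.+1 < n -> (n - 1) %/ 2 <= cdistn n (zigzag n j) (zigzag n j.+1).
Proof. rewrite /zigzag; case_ifs; rewrite /cdistn; case_ifs; lia. Qed.

Lemma zigzag_step1 n : 2 < n -> cdistn n (zigzag n 1) (zigzag n 2) = (n - 1) %/ 2.
Proof. rewrite /zigzag; case_ifs; rewrite /cdistn; case_ifs; lia. Qed.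

Theorem mainTheorem10 (n : nat) (Hn : 5 <= n) :
  (forall k : nat, 1 <= k <= (n - 1) %/ 2 ->
     exists L : square n, is_latin L /\ inner_distance L = k) /\
  (forall (k : nat) (L : square n), is_latin L -> inner_distance L = k ->
     forall k' : nat, 1 <= k' < k ->
       exists s : {perm 'I_n}, inner_distance (permute_square s L) = k').
Proof.
have n_gt1 : 1 < n by lia.
split=> [k le_k | k L latL IDL k' /andP[k'_gt0 lt_k'k]].
  pose L := sum_square (zigzag n) (ltnW n_gt1).
  have latL : is_latin L by apply: sum_square_latin; [apply: zigzag_lt | apply: zigzag_inj].
  have IDL : inner_distance L = (n - 1) %/ 2.
    apply: sum_square_inner_distance => [j|j|]; [exact: zigzag_lt | exact: zigzag_step |].
    by exists 1; [lia | apply: zigzag_step1; lia].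
  have [c [d [adj_cd neq_cd]]] := latin_adjacent_neq n_gt1 latL.
  have [|s IDs] := relabel_inner_distance adj_cd neq_cd (k := k); first by rewrite IDL.
  by exists (permute_square s L); split => //; apply: permute_square_latin.
have [c [d [adj_cd neq_cd]]] := latin_adjacent_neq n_gt1 latL.
by apply: relabel_inner_distance adj_cd neq_cd _; rewrite IDL; lia.
Qed.
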